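(* Let $a_0=1$, let $a_1,a_2,\ldots>0$ and $b_1,b_2,\ldots\in\mathbb{R}$, and let $A$ be the associated semi-infinite Jacobi matrix. For $T\in\mathbb{N}$ let $C_T$ be the $T\times T$ matrix with entries $\{C_T\}_{ij}=\int_{\mathbb{R}}\mathcal{T}_i(\lambda)\mathcal{T}_j(\lambda)\,d\rho(\lambda)$, $i,j=1,\ldots,T$, where $\rho$ is any solution of the Hamburger moment problem with moments $s_k=(A^ke_1,e_1)$, and let $\gamma_T$ be the largest eigenvalue of $C_T$. If there exists a constant $M\in\mathbb{R}$ with $\gamma_T\leqslant M$ for all $T=1,2,\ldots$, then $A$ is in the limit point case, i.e. the moment problem associated with $\{s_k\}$ is determinate.
   Context: Here $e_1=(1,0,0,\ldots)$ and $A$ acts on finitely supported sequences by $(A\theta)_1=b_1\theta_1+a_1\theta_2$, $(A\theta)_n=a_n\theta_{n+1}+a_{n-1}\theta_{n-1}+b_n\theta_n$ for $n\ge2$. A solution of the moment problem is a Borel measure $\rho$ on $\mathbb{R}$ with $\int\lambda^k\,d\rho=s_k$ for all $k\ge0$; determinate means the solution is unique, which is equivalent to $A$ (on finitely supported sequences in $l_2$) having deficiency indices $(0,0)$ (limit point case). The polynomials $\mathcal{T}_k$ are defined by $\mathcal{T}_0=0$, $\mathcal{T}_1=1$, $\mathcal{T}_{t+1}(\lambda)+\mathcal{T}_{t-1}(\lambda)-\lambda\mathcal{T}_t(\lambda)=0$; $C_T$ does not depend on the choice of $\rho$. *)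

From HB Require Import structures.
From mathcomp Require Import all_boot all_order all_algebra.
From mathcomp Require Import all_classical all_reals all_analysis.
Set Implicit Arguments. Unset Strict Implicit. Unset Printing Implicit Defensive.
Import Order.TTheory GRing.Theory Num.Theory.
Local Open Scope classical_set_scope.
Local Open Scope ring_scope.

(* Sequences theta : nat -> R are indexed from 1 (the value at 0 is unused /
   taken to be 0). a n, b n for n >= 1 are the Jacobi parameters. *)

Definition jacobi_op {R : realType} (a b : nat -> R) (theta : nat -> R) : nat -> R :=
  fun n => match n with
  | 0 => 0
  | 1 => b 1 * theta 1 + a 1 * theta 2
  | n'.+1 => a n * theta n.+1 + a n' * theta n' + b n * theta n
  end.

Definition e1 {R : realType} : nat -> R := fun n => if n == 1%N then 1 else 0.

(* s_k = (A^k e_1, e_1) *)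
Definition moment {R : realType} (a b : nat -> R) (k : nat) : R :=
  iter k (jacobi_op a b) e1 1%N.

Definition moment_solution {R : realType} (s : nat -> R)
    (rho : {measure set R -> \bar R}) : Prop :=
  forall k : nat, rho.-integrable setT (fun x => (x ^+ k)%:E) /\
    (\int[rho]_(x in setT) (x ^+ k)%:E = (s k)%:E)%E.

Fixpoint Tpoly {R : realType} (k : nat) (l : R) : R :=
  match k with
  | 0 => 0
  | 1 => 1
  | (t.+1 as k').+1 => l * Tpoly k' l - Tpoly t l
  end.

Definition CT {R : realType} (rho : {measure set R -> \bar R}) (T : nat) : 'M[R]_T :=
  \matrix_(i < T, j < T) Rintegral rho setT (fun x => Tpoly i.+1 x * Tpoly j.+1 x).

Definition largest_eigenvalue {R : realType} {n : nat} (C : 'M[R]_n) (g : R) : Prop :=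
  eigenvalue C g /\ forall x, eigenvalue C x -> x <= g.

Definition determinate {R : realType} (s : nat -> R) : Prop :=
  forall rho1 rho2 : {measure set R -> \bar R},
    moment_solution s rho1 -> moment_solution s rho2 ->
    forall A : set R, measurable A -> rho1 A = rho2 A.

From HB Require Import structures.
From mathcomp Require Import all_boot all_order all_algebra.
From mathcomp Require Import all_classical all_reals all_analysis.
From mathcomp Require Import measurable_realfun.
From mathcomp Require Import ring lra.
Import Order.TTheory GRing.Theory Num.Theory.
Import numFieldNormedType.Exports.
Set Implicit Arguments. Unset Strict Implicit. Unset Printing Implicit Defensive.
Local Open Scope classical_set_scope.
Local Open Scope ring_scope.

(* The largest eigenvalue of the symmetric matrix C_T dominates its last
   diagonal entry, so the hypothesis bounds int T_k^2 drho uniformly in k, for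
   every solution rho.  Since |T_k(x)| >= k whenever |x| >= 2, this forces every
   solution to vanish outside [-2, 2].  Finite measures carried by a
   compact interval are determined by their moments: with the smoothstep
   g(y) = 3y^2 - 2y^3 and h(y) = 4y(1 - y), the polynomials
   g^N(z(x)) - h(z(x))^N / 2, where z is an affine map sending the interval into
   [0, 1] and c to 1/2, are bounded by 2 there and converge pointwise to the
   indicator of ]c, +oo[.  By dominated convergence two such measures agree on
   all rays ]c, +oo[, a pi-system generating the Borel sets. *)

Section Rayleigh.
Variables (R : realType) (n : nat).
Implicit Types (C : 'M[R]_n) (u v : 'rV[R]_n).

Definition qform C u v : R := (u *m C *m v^T) 0 0.

Lemma qformE C u v : qform C u v = \sum_j (\sum_i u 0 i * C i j) * v 0 j.
Proof. by rewrite /qform !mxE; apply: eq_bigr => j _; rewrite !mxE. Qed.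

Lemma qform_sym C u v : C^T = C -> qform C u v = qform C v u.
Proof.
move=> symC; rewrite /qform.
have -> : (u *m C *m v^T) 0 0 = (u *m C *m v^T)^T 0 0 by rewrite [RHS]mxE.
by rewrite !trmx_mul trmxK symC mulmxA.
Qed.

Lemma qformDl C u1 u2 v : qform C (u1 + u2) v = qform C u1 v + qform C u2 v.
Proof. by rewrite /qform !mulmxDl mxE. Qed.

Lemma qformZl C t u v : qform C (t *: u) v = t * qform C u v.
Proof. by rewrite /qform -!scalemxAl mxE. Qed.

Lemma qformDr C u v1 v2 : qform C u (v1 + v2) = qform C u v1 + qform C u v2.
Proof. by rewrite /qform linearD /= mulmxDr mxE. Qed.

Lemma qformZr C t u v : qform C u (t *: v) = t * qform C u v.
Proof. by rewrite /qform linearZ /= -scalemxAr mxE. Qed.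

Lemma qform_deltar C u j : qform C u (delta_mx 0 j) = (u *m C) 0 j.
Proof. by rewrite /qform trmx_delta -colE mxE. Qed.

Lemma qform_delta C i j : qform C (delta_mx 0 i) (delta_mx 0 j) = C i j.
Proof. by rewrite qform_deltar -rowE mxE. Qed.

Lemma qform_eigen C v x : v *m C = x *: v -> qform C v v = x * qform 1%:M v v.
Proof. by move=> vC; rewrite /qform vC mulmx1 -scalemxAl mxE. Qed.

Lemma continuous_qform C : continuous (fun v => qform C v v).
Proof.
have coord k : continuous (fun v : 'rV[R]_n => v 0 k).
  by move=> v; exact: coord_continuous.
have -> : (fun v => qform C v v) = fun v => \sum_j (\sum_i v 0 i * C i j) * v 0 j.
  by apply: funext => v; rewrite qformE.
apply: continuous_big => [|j _ v]; first exact: add_continuous.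
have colC : continuous (fun v : 'rV[R]_n => \sum_i v 0 i * C i j).
  apply: continuous_big => [|i _ w]; first exact: add_continuous.
  exact: cvgM (coord i w) (cvg_cst _).
exact: cvgM (colC v) (coord j v).
Qed.

Lemma qform1 u v : qform 1%:M u v = \sum_j u 0 j * v 0 j.
Proof. by rewrite /qform mulmx1 mxE; apply: eq_bigr => j _; rewrite mxE. Qed.

Lemma qform1_ge0 v : 0 <= qform 1%:M v v.
Proof. by rewrite qform1 sumr_ge0 // => j _; rewrite -expr2 sqr_ge0. Qed.

Lemma qform1_gt0 v : v != 0 -> 0 < qform 1%:M v v.
Proof.
move=> v0; rewrite lt_def qform1_ge0 andbT; apply: contra v0.
rewrite qform1 psumr_eq0 => [/allP v0j|j _]; last by rewrite -expr2 sqr_ge0.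
apply/eqP/rowP => j; rewrite mxE; apply/eqP.
by rewrite -sqrf_eq0 expr2; exact: v0j (mem_index_enum j).
Qed.

Lemma qform_sym_expand C u w t : C^T = C ->
  qform C (u + t *: w) (u + t *: w) =
  qform C u u + 2 * t * qform C u w + t ^+ 2 * qform C w w.
Proof. by move=> symC; rewrite !qformDl !qformDr !qformZl !qformZr (qform_sym w u symC); ring. Qed.

Lemma quadratic_le0_linear_coef (a b : R) :
  (forall t, 2 * t * a + t ^+ 2 * b <= 0) -> a = 0.
Proof.
move=> quad_le0; pose k := 1 + `|b|.
have k0 : 0 < k by rewrite ltr_pwDl.
have := quad_le0 (a / k).
have -> : 2 * (a / k) * a + (a / k) ^+ 2 * b = a ^+ 2 * (2 * k + b) / k ^+ 2.
  by field; rewrite gt_eqF.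
have kb : 0 < 2 * k + b.
  by rewrite /k; have := ler_norm (- b); have := normr_ge0 b; rewrite normrN; lra.
rewrite pmulr_lle0 ?invr_gt0 ?exprn_gt0 // pmulr_lle0 // => a2_le0.
by apply/eqP; rewrite -sqrf_eq0 eq_le a2_le0 sqr_ge0.
Qed.

Lemma rayleigh_maximizer_eigen C c : C^T = C -> qform 1%:M c c = 1 ->
  (forall v, qform C v v <= qform C c c * qform 1%:M v v) ->
  c *m C = qform C c c *: c.
Proof.
move=> symC c1 cmax.
suff stationary w : qform C c w = qform C c c * qform 1%:M c w.
  by apply/rowP => j; rewrite -qform_deltar stationary qform_deltar mulmx1 mxE.
(* Along c + t w the bound is a quadratic inequality in t, tight at t = 0. *)
apply/eqP; rewrite -subr_eq0; apply/eqP.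
apply: (@quadratic_le0_linear_coef _ (qform C w w - qform C c c * qform 1%:M w w)) => t.
have := cmax (c + t *: w); rewrite !qform_sym_expand ?trmx1 // c1 -subr_le0.
by apply: le_trans; rewrite le_eqVlt; apply/orP; left; apply/eqP; ring.
Qed.

End Rayleigh.

Section SymmetricLargestEigenvalue.
Variables (R : realType) (n : nat) (C : 'M[R]_n.+1).

Lemma rayleigh_maximizer : exists2 c : 'rV[R]_n.+1, qform 1%:M c c = 1 &
  forall v, qform C v v <= qform C c c * qform 1%:M v v.
Proof.
pose S := [set v : 'rV[R]_n.+1 | qform 1%:M v v = 1].
have S0 : S !=set0 by exists (delta_mx 0 0); rewrite /S /= qform_delta mxE.
have Scompact : compact S.
  apply: (subclosed_compact _ (@rV_compact _ _ (fun=> `[(-1 : R), 1]%classic)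
    (fun=> @segment_compact _ _ _))).
    apply: (@preimage_closed _ _ (fun v => qform 1%:M v v) [set 1]).
      by move=> v _; exact: continuous_qform.
    exact: closed_eq.
  move=> v Sv i /=; rewrite in_itv /= -ler_norml.
  rewrite -(@ler_pXn2r _ 2) ?nnegrE ?normr_ge0 // expr1n real_normK ?num_real //.
  rewrite -Sv qform1 (bigD1 i) //= -expr2 lerDl sumr_ge0 // => j _.
  by rewrite -expr2 sqr_ge0.
have [c Sc cmax] := EVT_max_rV S0 Scompact (continuous_subspaceT (@continuous_qform _ _ C)).
have c1 : qform 1%:M c c = 1 by move: Sc; rewrite inE.
exists c => // v; have [->|v0] := eqVneq v 0.
  by rewrite /qform !mul0mx !mxE mulr0.
have Nv0 := qform1_gt0 v0.
pose s := Num.sqrt (qform 1%:M v v).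
have s0 : 0 < s by rewrite sqrtr_gt0.
have s2 : s ^+ 2 = qform 1%:M v v by rewrite sqr_sqrtr // ltW.
have Sw : (s^-1 *: v) \in S.
  by rewrite inE /S /= qformZl qformZr -s2; field; rewrite gt_eqF.
have := cmax _ Sw; rewrite qformZl qformZr -s2 => h.
by rewrite -ler_pdivrMr ?exprn_gt0 // mulrC -exprVn expr2 -mulrA.
Qed.

Lemma sym_largest_eigenvalue_ge_diag : C^T = C ->
  exists g, largest_eigenvalue C g /\ forall i, C i i <= g.
Proof.
move=> symC; have [c c1 cmax] := rayleigh_maximizer.
have c0 : c != 0.
  by apply: contra_eq_neq c1 => ->; rewrite /qform !mul0mx mxE eq_sym oner_neq0.
exists (qform C c c); split; first split.
- by apply/eigenvalueP; exists c => //; exact: rayleigh_maximizer_eigen.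
- move=> x /eigenvalueP [v vC v0].
  by have := cmax v; rewrite (qform_eigen vC) ler_pM2r // qform1_gt0.
- by move=> i; have := cmax (delta_mx 0 i); rewrite !qform_delta mxE eqxx mulr1.
Qed.

End SymmetricLargestEigenvalue.

Section MomentSolution.
Variables (R : realType) (s : nat -> R) (rho : {measure set R -> \bar R}).
Hypothesis rho_s : moment_solution s rho.
Local Open Scope ereal_scope.

Lemma moment_solution_poly (p : {poly R}) :
  rho.-integrable setT (fun x => p.[x]%:E) /\
  \int[rho]_x p.[x]%:E = (\sum_(i < size p) p`_i * s i)%:E.
Proof.
under eq_fun do rewrite horner_coef.
elim: (size p) => [|m [int_m int_mE]].
  under eq_fun do rewrite big_ord0.
  by rewrite big_ord0; split; [exact: integrable0 | exact: integral0].
under eq_fun do rewrite big_ord_recr /= EFinD EFinM.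
have [int_Xm int_XmE] := rho_s m.
have int_cXm := integrableZl measurableT p`_m int_Xm.
split; first exact: integrableD int_m int_cXm.
by rewrite integralD //= integralZl // int_mE int_XmE big_ord_recr /= EFinD EFinM.
Qed.

Lemma moment_solution_setT : rho setT = (s 0%N)%:E.
Proof.
have [_ <-] := rho_s 0%N.
by under eq_fun do rewrite expr0; rewrite integral_cst //= mul1e.
Qed.

End MomentSolution.

Section ChebyshevLike.
Variable R : realType.
Implicit Types (k : nat) (x : R).

Fixpoint Tpoly_poly k : {poly R} :=
  match k with
  | 0 => 0
  | 1 => 1
  | (t.+1 as k').+1 => 'X * Tpoly_poly k' - Tpoly_poly t
  end.

Lemma horner_Tpoly_poly k x : (Tpoly_poly k).[x] = Tpoly k x.
Proof.
suff : (Tpoly_poly k).[x] = Tpoly k x /\ (Tpoly_poly k.+1).[x] = Tpoly k.+1 x by case.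
elim: k => [|k [IHk IHk1]]; first by rewrite /= horner0 hornerC.
by split=> //=; rewrite hornerD hornerN hornerM hornerX IHk IHk1.
Qed.

Lemma TpolySS k x : Tpoly k.+2 x = x * Tpoly k.+1 x - Tpoly k x.
Proof. by []. Qed.

Lemma Tpoly_ge_nat k x : 2 <= x -> k%:R <= Tpoly k x.
Proof.
move=> x2; suff : k%:R <= Tpoly k x /\ Tpoly k x + 1 <= Tpoly k.+1 x by case.
elim: k => [|k [IHk IHk1]]; first by rewrite /= add0r lexx.
have Tk1 : k.+1%:R <= Tpoly k.+1 x by rewrite -natr1; lra.
split=> //; rewrite TpolySS; have Tk1_ge0 : 0 <= Tpoly k.+1 x by apply: le_trans Tk1.
have x2_ge0 : 0 <= x - 2 by rewrite subr_ge0.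
have := mulr_ge0 x2_ge0 Tk1_ge0; nra.
Qed.

Lemma Tpoly_opp k x : Tpoly k (- x) = (-1) ^+ k.+1 * Tpoly k x.
Proof.
suff : Tpoly k (- x) = (-1) ^+ k.+1 * Tpoly k x /\
    Tpoly k.+1 (- x) = (-1) ^+ k.+2 * Tpoly k.+1 x by case.
elim: k => [|k [IHk IHk1]]; first by rewrite /= mulr0 sqrrN expr1n mulr1.
by split=> //; rewrite !TpolySS IHk IHk1 !exprS; ring.
Qed.

Lemma Tpoly_norm_ge_nat k x : 2 <= `|x| -> k%:R <= `|Tpoly k x|.
Proof.
have [x_ge0|x_lt0] := lerP 0 x.
  by rewrite ger0_norm // => /(Tpoly_ge_nat k) Tk; rewrite (le_trans Tk) ?ler_norm.
rewrite ltr0_norm // => /(Tpoly_ge_nat k) Tk.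
by rewrite -[x]opprK Tpoly_opp normrM normrX normrN1 expr1n mul1r (le_trans Tk) ?ler_norm.
Qed.

End ChebyshevLike.

Arguments Tpoly_poly {R} k.

Section Concentration.
Local Open Scope ereal_scope.

Lemma le_measure_integral d (T : measurableType d) (R : realType)
    (mu : {measure set T -> \bar R}) (A : set T) (f : T -> R) (c : R) :
  measurable A -> measurable_fun setT f -> (0 <= c)%R ->
  (forall x, 0 <= f x)%R -> (forall x, A x -> c <= f x)%R ->
  c%:E * mu A <= \int[mu]_x (f x)%:E.
Proof.
move=> mA mf c0 f0 fA; rewrite -integral_cst //.
apply: (@le_trans _ _ (\int[mu]_(x in A) (f x)%:E)).
  by apply: ge0_le_integral => //=; exact/measurable_EFinP/measurable_funTS.
apply: ge0_subset_integral => //=; first exact: measurableT_comp.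
by move=> x _; rewrite lee_fin.
Qed.

Lemma natmul_bounded_eq0 (R : realType) (x : \bar R) (M : R) :
  0 <= x -> (forall k : nat, k.+1%:R%:E * x <= M%:E) -> x = 0.
Proof.
case: x => [r||] //; rewrite ?lee_fin => r0 bounded; last first.
  by have := bounded 0%N; rewrite mul1e leye_eq.
have [r_eq0|r_gt0] := eqVneq r 0%R; first by rewrite r_eq0.
have {r_gt0}r_gt0 : (0 < r)%R by rewrite lt_def r_gt0.
pose k := Num.Def.archi_bound (`|M| / r).
have := bounded k; rewrite -EFinM lee_fin => kr_le; exfalso.
have : (`|M| < k.+1%:R * r)%R.
  rewrite -ltr_pdivrMr // (lt_le_trans (archi_boundP _)) ?ler_nat //.
  by rewrite divr_ge0 // ltW.
by have := ler_norm M; lra.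
Qed.

End Concentration.

Lemma moment_solution_concentrated (R : realType) (s : nat -> R)
    (rho : {measure set R -> \bar R}) (M : R) : moment_solution s rho ->
  (forall k, Rintegral rho setT (fun x => Tpoly k.+1 x * Tpoly k.+1 x) <= M) ->
  rho (~` `[-2, 2]%classic) = 0%E.
Proof.
move=> rho_s bounded; apply: (natmul_bounded_eq0 (M := M)) => // k.
have [int_T2 _] := moment_solution_poly rho_s (Tpoly_poly k.+1 ^+ 2).
have T2E : (fun x : R => (Tpoly_poly k.+1 ^+ 2).[x]%:E) =
    (fun x => (Tpoly k.+1 x * Tpoly k.+1 x)%:E).
  by apply: funext => x; rewrite hornerM horner_Tpoly_poly.
rewrite T2E in int_T2; have := bounded k; rewrite -lee_fin; apply: le_trans.
rewrite /Rintegral fineK ?integrable_fin_num //; apply: le_measure_integral => //.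
- by apply: measurableC; exact: measurable_itv.
- by apply/measurable_EFinP; case/integrableP: int_T2.
- by move=> x; rewrite -expr2 sqr_ge0.
move=> x /= /negP; rewrite in_itv /= -ler_norml -ltNge => /ltW /(Tpoly_norm_ge_nat k.+1).
move=> Tk; rewrite -expr2 -real_normK ?num_real //.
have T1 : 1 <= `|Tpoly k.+1 x| by apply: le_trans Tk; rewrite ler1n.
nra.
Qed.

Section StepApproximation.
Variable R : realType.
Implicit Types (y : R) (N : nat).

Definition smoothstep y := 3 * y ^+ 2 - 2 * y ^+ 3.
Definition bump y := 4 * y * (1 - y).
(* The bump term equals 1 only at the fixed point y = 1/2 of smoothstep, where it
   turns the limit 1/2 into 0. *)
Definition step_approx N y := iter N smoothstep y - 2^-1 * bump y ^+ N.

Lemma smoothstep_itv y : 0 <= y <= 1 -> 0 <= smoothstep y <= 1.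
Proof.
case/andP=> y0 y1; rewrite /smoothstep; apply/andP; split.
  have -> : 3 * y ^+ 2 - 2 * y ^+ 3 = y ^+ 2 * (3 - 2 * y) by ring.
  by rewrite mulr_ge0 ?sqr_ge0 //; lra.
rewrite -subr_ge0.
have -> : 1 - (3 * y ^+ 2 - 2 * y ^+ 3) = (1 - y) ^+ 2 * (1 + 2 * y) by ring.
by rewrite mulr_ge0 ?sqr_ge0 //; lra.
Qed.

Lemma iter_smoothstep_itv N y : 0 <= y <= 1 -> 0 <= iter N smoothstep y <= 1.
Proof. by move=> y01; elim: N => //= N; exact: smoothstep_itv. Qed.

Lemma iter_smoothstep_sym N y : iter N smoothstep (1 - y) = 1 - iter N smoothstep y.
Proof. by elim: N => //= N ->; rewrite /smoothstep; ring. Qed.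

Lemma iter_smoothstep_half N : iter N smoothstep 2^-1 = 2^-1 :> R.
Proof. by elim: N => //= N ->; rewrite /smoothstep; field. Qed.

Lemma iter_smoothstep_cvg0 y : 0 <= y -> y < 2^-1 ->
  iter N smoothstep y @[N --> \oo] --> 0.
Proof.
move=> y0 y_lt_half; pose q := y * (3 - 2 * y).
have q0 : 0 <= q by rewrite mulr_ge0 //; lra.
have q1 : q < 1.
  have : 0 < (1 - 2 * y) * (1 - y) by apply: mulr_gt0; lra.
  by rewrite /q; nra.
have geometric N : 0 <= iter N smoothstep y <= q ^+ N * y.
  (* smoothstep w = w * (w (3 - 2 w)), and w (3 - 2 w) <= q while w <= y. *)
  elim: N => [|N /andP [w0 wle]] /=; first by rewrite expr0 mul1r y0 lexx.
  set w := iter N smoothstep y in w0 wle *.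
  have qN1 : q ^+ N <= 1 by rewrite exprn_ile1 // ltW.
  have wy : w <= y by apply: le_trans wle _; rewrite ler_piMl.
  have wq : w * (3 - 2 * w) <= q.
    have : 0 <= (y - w) * (3 - 2 * y - 2 * w) by apply: mulr_ge0; lra.
    by rewrite /q; nra.
  have -> : smoothstep w = w * (w * (3 - 2 * w)) by rewrite /smoothstep; ring.
  apply/andP; split; first by apply: mulr_ge0 => //; apply: mulr_ge0 => //; lra.
  rewrite exprS -mulrA mulrC; apply: le_trans (ler_wpM2r w0 wq) _.
  have gap : 0 <= q ^+ N * y - w by rewrite subr_ge0.
  by have := mulr_ge0 q0 gap; nra.
apply: (@squeeze_cvgr _ _ _ _ (fun=> 0) (fun N => q ^+ N * y)).
- by apply: nearW => N; exact: geometric.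
- exact: cvg_cst.
- by rewrite -(mul0r y); apply: cvgM (cvg_cst y); apply: cvg_expr; rewrite ger0_norm.
Qed.

Lemma bump_itv y : 0 <= y <= 1 -> 0 <= bump y <= 1.
Proof.
case/andP=> y0 y1; rewrite /bump; apply/andP; split.
  by rewrite !mulr_ge0 //; lra.
rewrite -subr_ge0.
have -> : 1 - 4 * y * (1 - y) = (2 * y - 1) ^+ 2 by ring.
exact: sqr_ge0.
Qed.

Lemma bump_expr_cvg0 y : 0 <= y <= 1 -> y != 2^-1 -> bump y ^+ N @[N --> \oo] --> 0.
Proof.
move=> y01 y_neq_half; apply: cvg_expr.
have /andP [b0 b1] := bump_itv y01.
rewrite ger0_norm // lt_neqAle b1 andbT; apply: contra y_neq_half => /eqP b_eq1.
have : (2 * y - 1) ^+ 2 = 1 - bump y by rewrite /bump; ring.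
rewrite b_eq1 subrr => /eqP; rewrite sqrf_eq0 subr_eq0 => /eqP y2.
by apply/eqP; lra.
Qed.

Lemma step_approx_cvg y : 0 <= y <= 1 ->
  step_approx N y @[N --> \oo] --> (if 2^-1 < y then 1 else 0 : R).
Proof.
move=> y01; have [->|y_neq_half] := eqVneq y 2^-1.
  have bump_half : bump 2^-1 = 1 :> R by rewrite /bump; field.
  rewrite ltxx; apply: cvg_near_cst; apply: nearW => N.
  by rewrite /step_approx iter_smoothstep_half bump_half expr1n mulr1 subrr.
have bump_cvg : 2^-1 * bump y ^+ N @[N --> \oo] --> 0.
  by rewrite -(mulr0 2^-1); exact: cvgM (cvg_cst _) (bump_expr_cvg0 y01 y_neq_half).
rewrite -[X in _ --> X]subr0; apply: cvgB bump_cvg.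
case/andP: y01 => y0 y1; case: ltrP => [y_gt_half|y_le_half]; last first.
  by apply: iter_smoothstep_cvg0; rewrite // lt_neqAle y_neq_half.
have -> : (fun N => iter N smoothstep y) = fun N => 1 - iter N smoothstep (1 - y).
  by apply: funext => N; rewrite iter_smoothstep_sym opprB addrC subrK.
by rewrite -[X in _ --> X]subr0; apply: cvgB (cvg_cst _) _; apply: iter_smoothstep_cvg0; lra.
Qed.

Lemma step_approx_norm_le N y : 0 <= y <= 1 -> `|step_approx N y| <= 2.
Proof.
move=> y01; have /andP [s0 s1] := iter_smoothstep_itv N y01.
have /andP [b0 b1] := bump_itv y01.
have bN0 : 0 <= bump y ^+ N := exprn_ge0 N b0.
have bN1 : bump y ^+ N <= 1 := exprn_ile1 N b0 b1.
rewrite ler_norml /step_approx; apply/andP; split; lra.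
Qed.

Definition smoothstep_poly : {poly R} := 3%:P * 'X^2 - 2%:P * 'X^3.
Definition bump_poly : {poly R} := 4%:P * 'X * (1 - 'X).

Lemma horner_smoothstep_poly y : smoothstep_poly.[y] = smoothstep y.
Proof. by rewrite /smoothstep_poly /smoothstep !hornerE. Qed.

Lemma horner_bump_poly y : bump_poly.[y] = bump y.
Proof. by rewrite /bump_poly /bump !hornerE. Qed.

End StepApproximation.

Arguments smoothstep_poly {R}.
Arguments bump_poly {R}.

Section StepPolynomials.
Variables (R : realType) (r c : R).
Implicit Types (x : R) (N : nat).

(* Any length above 2 (|r| + |c|) makes rescale map [-r, r] into [0, 1]. *)
Let len : R := 2 * (`|r| + `|c|) + 1.

Let len_gt0 : 0 < len.
Proof. by rewrite /len; have := normr_ge0 r; have := normr_ge0 c; lra. Qed.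

Definition rescale x := (x - c) / len + 2^-1.

Lemma rescale_itv x : `|x| <= r -> 0 <= rescale x <= 1.
Proof.
move=> xr; have xc : `|x - c| <= `|r| + `|c|.
  by apply: le_trans (ler_normB x c) _; rewrite lerD2r (le_trans xr) ?ler_norm.
have : `|(x - c) / len| <= 2^-1.
  by rewrite normrM normfV (gtr0_norm len_gt0) ler_pdivrMr // /len; lra.
by rewrite ler_norml /rescale => /andP [lo hi]; apply/andP; split; lra.
Qed.

Lemma rescale_gt_half x : (2^-1 < rescale x) = (c < x).
Proof. by rewrite /rescale ltrDr pmulr_lgt0 ?invr_gt0 // subr_gt0. Qed.

Definition rescale_poly : {poly R} := len^-1 *: ('X - c%:P) + (2^-1)%:P.

Definition step_poly N : {poly R} :=
  iter N (fun q => smoothstep_poly \Po q) rescale_poly -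
  (2^-1)%:P * (bump_poly \Po rescale_poly) ^+ N.

Lemma horner_step_poly N x : (step_poly N).[x] = step_approx N (rescale x).
Proof.
have horner_rescale : rescale_poly.[x] = rescale x.
  by rewrite /rescale_poly /rescale !hornerE mulrC.
rewrite /step_poly /step_approx hornerD hornerN hornerM hornerC horner_exp.
rewrite horner_comp horner_rescale horner_bump_poly; congr (_ - _).
elim: N => [|N IHN] //=.
by rewrite horner_comp IHN horner_smoothstep_poly.
Qed.

Lemma step_poly_cvg x : `|x| <= r ->
  (step_poly N).[x] @[N --> \oo] --> (if c < x then 1 else 0 : R).
Proof.
move=> xr; under eq_fun do rewrite horner_step_poly.
by rewrite -rescale_gt_half; exact: step_approx_cvg (rescale_itv xr).
Qed.

Lemma step_poly_norm_le N x : `|x| <= r -> `|(step_poly N).[x]| <= 2.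
Proof. by move=> xr; rewrite horner_step_poly step_approx_norm_le // rescale_itv. Qed.

End StepPolynomials.

Section RayMeasure.
Variables (R : realType) (rho : {measure set R -> \bar R}) (r : R).
Hypotheses (rho_fin : (rho setT < +oo)%E) (rho_conc : rho (~` `[- r, r]%classic) = 0%E).
Local Open Scope ereal_scope.

Let D : set R := `[(- r)%R, r]%classic.

Let mD : measurable D. Proof. exact: measurable_itv. Qed.

Lemma measure_concentratedE (A : set R) : measurable A -> rho A = rho (D `&` A).
Proof.
move=> mA; have null : rho (A `\` D) = 0.
  apply/eqP; rewrite eq_le measure_ge0 andbT -rho_conc.
  by apply: le_measure; rewrite ?inE //; [exact: measurableD | exact: measurableC].
rewrite (measureDI rho mA mD) [X in X + _](_ : _ = 0) ?add0e //.
by rewrite setIC.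
Qed.

Lemma integral_step_poly_cvg (c : R) :
  \int[rho]_x (step_poly r c N).[x]%:E @[N --> \oo] --> rho `]c, +oo[%classic.
Proof.
pose f_ N x := ((step_poly r c N).[x] * \1_D x)%:E.
pose f x : \bar R := (\1_(D `&` `]c, +oo[%classic) x)%:E.
have mDc : measurable (D `&` `]c, +oo[%classic) by apply: measurableI => //; exact: measurable_itv.
have mf_ N : measurable_fun setT (f_ N).
  by apply/measurable_EFinP; apply: measurable_funM; [exact: measurable_poly | exact: measurable_indic].
have mf : measurable_fun setT f by apply/measurable_EFinP; exact: measurable_indic.
have int2 : rho.-integrable setT (cst 2%:E).
  apply/integrableP; split=> //.
  under eq_integral do rewrite /= normr_nat.
  by rewrite integral_cst //= lte_mul_pinfty.
have f_cvg : \forall x \ae rho, setT x -> f_ ^~ x @ \oo --> f x.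
  apply: aeW => x _; rewrite /f_ /f !indicE.
  have [xD|xD] := boolP (x \in D); last first.
    rewrite (_ : x \in _ = false); last by apply/negbTE; apply: contra xD; rewrite !inE => -[].
    by under eq_fun do rewrite mulr0; exact: cvg_cst.
  have xr : (`|x| <= r)%R by move: xD; rewrite inE /D /= in_itv /= ler_norml.
  have -> : (x \in D `&` `]c, +oo[%classic) = (c < x)%R.
    by rewrite in_setI xD /=; apply/idP/idP; rewrite inE /= in_itv /= andbT.
  apply: cvg_EFin; first exact: nearW.
  under eq_fun do rewrite mulr1.
  by have := step_poly_cvg (c := c) xr; case: ifP.
have f_bound : \forall x \ae rho, forall N, setT x -> `|f_ N x| <= cst 2%:E x.
  apply: aeW => x N _; rewrite /f_ /= lee_fin indicE.
  have [xD|_] := boolP (x \in D); last by rewrite mulr0 normr0.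
  have xr : (`|x| <= r)%R by move: xD; rewrite inE /D /= in_itv /= ler_norml.
  by rewrite mulr1 step_poly_norm_le.
have [_ _ dominated] := dominated_convergence measurableT mf_ mf f_cvg int2 f_bound.
rewrite measure_concentratedE; last exact: measurable_itv.
rewrite /f integral_indic // setIT in dominated.
apply: cvg_trans dominated; apply: near_eq_cvg; apply: nearW => N.
apply: ae_eq_integral => //; first by apply/measurable_EFinP; exact: measurable_poly.
exists (~` D); split => //; first exact: measurableC.
move=> x /= not_eq xD; apply: not_eq => _.
by rewrite /f_ indicE mem_set // mulr1.
Qed.

End RayMeasure.

Section Determinacy.
Variables (R : realType) (s : nat -> R) (r : R).
Variables (rho1 rho2 : {measure set R -> \bar R}).
Hypotheses (rho1_s : moment_solution s rho1) (rho2_s : moment_solution s rho2).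
Hypotheses (rho1_conc : rho1 (~` `[- r, r]%classic) = 0%E)
  (rho2_conc : rho2 (~` `[- r, r]%classic) = 0%E).

Lemma moment_solutions_eq_ray c : rho1 `]c, +oo[%classic = rho2 `]c, +oo[%classic.
Proof.
have fin rho : moment_solution s rho -> (rho setT < +oo)%E.
  by move=> rho_s; rewrite (moment_solution_setT rho_s) ltry.
have := integral_step_poly_cvg (fin _ rho1_s) rho1_conc (c := c).
have := integral_step_poly_cvg (fin _ rho2_s) rho2_conc (c := c).
have -> : (fun N => \int[rho2]_x (step_poly r c N).[x]%:E)%E =
    (fun N => \int[rho1]_x (step_poly r c N).[x]%:E)%E.
  apply: funext => N.
  by have [_ ->] := moment_solution_poly rho1_s (step_poly r c N);
    have [_ ->] := moment_solution_poly rho2_s (step_poly r c N).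
by move=> cvg2 cvg1; rewrite -(cvg_unique _ cvg1 cvg2).
Qed.

Lemma moment_solutions_eq A : measurable A -> rho1 A = rho2 A.
Proof.
apply: (measure_unique (@RGenOInfty.G R) (fun k => `](- k%:R), +oo[%classic)).
- exact: RGenOInfty.measurableE.
- move=> _ _ [x ->] [y ->]; exists (Num.max x y).
  apply/seteqP; split => t /=; rewrite !in_itv /= !andbT gt_max; first by case=> -> ->.
  by case/andP.
- by move=> k; exists (- k%:R).
- apply/seteqP; split => // t _; exists (Num.Def.archi_bound `|t|) => //=.
  rewrite in_itv /= andbT ltrNl (le_lt_trans (ler_norm _)) // normrN.
  exact: archi_boundP.
- by move=> _ [c ->]; exact: moment_solutions_eq_ray.
- move=> k; apply: (@le_lt_trans _ _ (rho1 setT)).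
    by apply: le_measure; rewrite ?inE //; exact: measurable_itv.
  by rewrite (moment_solution_setT rho1_s) ltry.
Qed.

End Determinacy.

Lemma CT_sym (R : realType) (rho : {measure set R -> \bar R}) T : (CT rho T)^T = CT rho T.
Proof.
by apply/matrixP => i j; rewrite !mxE; congr Rintegral; apply: funext => x; rewrite mulrC.
Qed.

Unset Implicit Arguments.

Theorem mainTheorem2 (R : realType) (a b : nat -> R)
  (ha0 : a 0%N = 1) (hapos : forall n : nat, (0 < n)%N -> 0 < a n)
  (hbound : exists M : R, forall rho : {measure set R -> \bar R},
      moment_solution (moment a b) rho ->
      forall (T : nat) (g : R), (0 < T)%N -> largest_eigenvalue (CT rho T) g -> g <= M) :
  determinate (moment a b).
Proof.
case: hbound => M gamma_le_M.
have concentrated rho : moment_solution (moment a b) rho ->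
    rho (~` `[-2, 2]%classic) = 0%E.
  move=> rho_s; apply: (moment_solution_concentrated (M := M) rho_s) => k.
  have [g [g_largest g_ge_diag]] := sym_largest_eigenvalue_ge_diag (CT_sym rho k.+1).
  apply: le_trans (gamma_le_M rho rho_s k.+1 g isT g_largest).
  by have := g_ge_diag ord_max; rewrite mxE.
move=> rho1 rho2 rho1_s rho2_s.
exact: moment_solutions_eq rho1_s rho2_s (concentrated _ rho1_s) (concentrated _ rho2_s).
Qed.
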